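(* Let $a,b,a',b'\in\mathbb{R}$, $n,m\in\mathbb{N}_0$, and for $\sigma>0$ let \[ f(\sigma)=\int_a^b\int_{a'}^{b'}x^ny^me^{-\sigma^2(x-y)^2}\,dy\,dx. \] Let $\Delta=\{b-b',\,b-a',\,a-b',\,a-a'\}$. Then $f$ is a linear combination (with coefficients independent of $\sigma$) of terms of the form \[ \sigma^{-2k}e^{-\sigma^2\delta^2}\qquad\text{and}\qquad\sigma^{-(2k-1)}\operatorname{Erf}(\sigma\delta),\qquad k\in\{1,2,\dots\},\ \delta\in\Delta, \] where the exponent $\nu$ of $\sigma^{-1}$ (namely $\nu=2k$ in the first case and $\nu=2k-1$ in the second) satisfies $1\le\nu\le n+m+2$. The coefficient of a term belonging to $\delta=c-c'$ with $c\in\{a,b\}$ and $c'\in\{a',b'\}$ is a homogeneous polynomial of degree $n+m+2-\nu$ in $\mathbb{Q}[c,c']$.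
   Context: $\operatorname{Erf}(\xi)=\int_0^\xi e^{-x^2}\,dx$ (the odd primitive of the Gaussian, normalized without the factor $2/\sqrt\pi$). *)

From Stdlib Require Import Reals QArith.
From Coquelicot Require Import Coquelicot.
Open Scope R_scope.

(* Erf(xi) = int_0^xi e^{-x^2} dx  (no 2/sqrt(pi) normalisation; oriented). *)
Definition Erf (xi : R) : R := RInt (fun x => exp (- (x ^ 2))) 0 xi.

Definition fint (n m : nat) (a b a' b' sigma : R) : R :=
  RInt (fun x => RInt (fun y => x ^ n * y ^ m * exp (- (sigma ^ 2 * (x - y) ^ 2))) a' b') a b.

Definition hom_poly_eval (d : nat) (q : nat -> Q) (c c' : R) : R :=
  sum_f_R0 (fun i => Q2R (q i) * c ^ i * c' ^ (d - i)) d.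

Definition basis_term (nu : nat) (sigma delta : R) : R :=
  if Nat.even nu then / sigma ^ nu * exp (- (sigma ^ 2 * delta ^ 2))
  else / sigma ^ nu * Erf (sigma * delta).

Definition pair_sum (N : nat) (P : nat -> nat -> Q) (c c' sigma : R) : R :=
  sum_f_R0 (fun k => hom_poly_eval (N - S k) (P (S k)) c c' * basis_term (S k) sigma (c - c'))
    (N - 1).

From Stdlib Require Import Reals QArith Qreals Lra Lia Wf_nat.
From Coquelicot Require Import Coquelicot.
Open Scope R_scope.

(* Write B_nu(d) for [basis_term nu sigma d]; for even nu, B_(nu+1)' = B_nu and
   B_(nu+2)' = -2 d B_nu. Call i + j + nu the weight of x^i y^j B_nu(x - y).
   Integration by parts shows that each such monomial has an x-primitive that
   is a rational combination of monomials of weight one higher with nu >= 1: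
   for odd nu differentiate x^i against B_nu = B_(nu-1)'; for even nu split
   x^(i+1) B_nu = x^i (x - y) B_nu + y x^i B_nu and use
   (x - y) B_nu = -1/2 d/dx B_(nu+2). As every B_nu is even or odd, such
   combinations are stable under swapping x and y, so y-primitives exist too.
   Hence the integrand x^n y^m B_0(x - y) has a y-primitive G of weight
   n + m + 1, G has an x-primitive F of weight n + m + 2, and the double
   integral is F(b,b') - F(a,b') - F(b,a') + F(a,a'). *)

Lemma is_derive_eq (f : R -> R) (x l l' : R) : is_derive f x l -> l = l' -> is_derive f x l'.
Proof. now intros H <-. Qed.

Lemma Q2R_of_nat (k : nat) : Q2R (inject_Z (Z.of_nat k)) = INR k.
Proof. unfold Q2R; simpl; rewrite INR_IZR_INZ; field. Qed.

Lemma sum_f_R0_single (f : nat -> R) (n p : nat) :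
  (p <= n)%nat -> (forall k, (k <= n)%nat -> k <> p -> f k = 0) -> sum_f_R0 f n = f p.
Proof.
  induction n as [|n IH]; intros Hp Hf; simpl.
  - now replace p with 0%nat by lia.
  - destruct (Nat.eq_dec p (S n)) as [->|Hne].
    + rewrite sum_eq_R0; [ring|]. intros k Hk; apply Hf; lia.
    + rewrite (Hf (S n)), IH by (lia || (intros; apply Hf; lia)). ring.
Qed.

Lemma RInt_RInt_of_primitives (g H F : R -> R -> R) (a b a' b' : R) :
  (forall x y, is_derive (fun v => H x v) y (g x y)) ->
  (forall x y, continuous (fun v => g x v) y) ->
  (forall x y, is_derive (fun u => F u y) x (H x y)) ->
  (forall x y, continuous (fun u => H u y) x) ->
  RInt (fun x => RInt (fun y => g x y) a' b') a b = F b b' - F a b' - F b a' + F a a'.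
Proof.
  intros dH cg dF cH.
  rewrite (RInt_ext _ (fun x => H x b' - H x a')).
  2:{ intros x _; apply is_RInt_unique.
      apply (is_RInt_derive (fun v => H x v)); intros; auto. }
  rewrite (is_RInt_unique _ a b (minus (F b b' - F b a') (F a b' - F a a'))).
  - unfold minus, plus, opp; simpl; ring.
  - apply (is_RInt_derive (fun u => F u b' - F u a')); intros x _.
    + apply (is_derive_minus (fun u => F u b') (fun u => F u a')); auto.
    + apply (continuous_minus (fun u => H u b') (fun u => H u a')); auto.
Qed.

Lemma continuous_gauss (x : R) : continuous (fun t => exp (- (t ^ 2))) x.
Proof.
  apply (ex_derive_continuous (K := R_AbsRing) (V := R_NormedModule)).
  auto_derive; auto.
Qed.

Lemma is_derive_Erf (x : R) : is_derive Erf x (exp (- (x ^ 2))).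
Proof.
  apply (is_derive_RInt (fun t => exp (- (t ^ 2))) Erf 0 x); [|apply continuous_gauss].
  apply filter_forall; intros y.
  apply (RInt_correct (V := R_CompleteNormedModule)), ex_RInt_continuous.
  intros; apply continuous_gauss.
Qed.

Lemma Erf_opp (x : R) : Erf (- x) = - Erf x.
Proof.
  set (g := fun t => exp (- (t ^ 2))).
  assert (Hg : forall u v, ex_RInt g u v)
    by (intros; apply (ex_RInt_continuous (V := R_CompleteNormedModule));
        intros; apply continuous_gauss).
  unfold Erf; fold g.
  replace (RInt g 0 (- x)) with (RInt g (-1 * 0 + 0) (-1 * x + 0)) by (f_equal; ring).
  rewrite <- RInt_comp_lin by apply Hg.
  rewrite (RInt_ext _ (fun t => opp (g t))).
  - apply (RInt_opp (V := R_CompleteNormedModule)), Hg.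
  - intros t _; unfold g, scal, opp; simpl; unfold mult; simpl.
    replace ((-1 * t + 0) * ((-1 * t + 0) * 1)) with (t * (t * 1)) by ring; ring.
Qed.

Lemma is_derive_basis_term_S (nu : nat) (s d : R) :
  Nat.even nu = true -> s <> 0 ->
  is_derive (basis_term (S nu) s) d (basis_term nu s d).
Proof.
  intros Hnu Hs.
  unfold basis_term.
  rewrite Nat.even_succ, <- Nat.negb_even, Hnu; simpl negb; cbv iota.
  eapply is_derive_eq.
  - apply is_derive_scal.
    apply (is_derive_comp Erf (fun t => s * t)); [apply is_derive_Erf|].
    auto_derive; auto.
  - replace ((s * d) ^ 2) with (s ^ 2 * d ^ 2) by ring.
    unfold scal; simpl; unfold mult; simpl; field; split; [apply pow_nonzero|]; auto.
Qed.

Lemma is_derive_basis_term_SS (nu : nat) (s d : R) :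
  Nat.even nu = true -> s <> 0 ->
  is_derive (basis_term (S (S nu)) s) d (-2 * d * basis_term nu s d).
Proof.
  intros Hnu Hs.
  unfold basis_term; simpl Nat.even; rewrite Hnu.
  auto_derive; auto.
  simpl; field; split; [apply pow_nonzero|]; auto.
Qed.

Lemma basis_term_opp (nu : nat) (s d : R) :
  basis_term nu s (- d) = (if Nat.even nu then 1 else -1) * basis_term nu s d.
Proof.
  unfold basis_term; destruct (Nat.even nu).
  - replace ((- d) ^ 2) with (d ^ 2) by ring; ring.
  - replace (s * - d) with (- (s * d)) by ring.
    rewrite Erf_opp; ring.
Qed.

Lemma continuous_basis_term (nu : nat) (s d : R) : continuous (basis_term nu s) d.
Proof.
  unfold basis_term; destruct (Nat.even nu).
  - apply (ex_derive_continuous (K := R_AbsRing) (V := R_NormedModule)).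
    auto_derive; auto.
  - apply (ex_derive_continuous (K := R_AbsRing) (V := R_NormedModule)).
    eexists; apply is_derive_scal.
    apply (is_derive_comp Erf (fun t => s * t)); [apply is_derive_Erf|].
    auto_derive; auto.
Qed.

Definition monomial (q : Q) (nu i j : nat) (x y s : R) : R :=
  Q2R q * x ^ i * y ^ j * basis_term nu s (x - y).

Lemma is_derive_monomial (q : Q) (nu i j : nat) (x y s b' : R) :
  is_derive (basis_term nu s) (x - y) b' ->
  is_derive (fun u => monomial q nu i j u y s) x
    (Q2R q * y ^ j * (INR i * x ^ pred i * basis_term nu s (x - y) + x ^ i * b')).
Proof.
  intros Hb; unfold monomial.
  apply (is_derive_ext (V := R_NormedModule)
           (fun u => Q2R q * y ^ j * (u ^ i * basis_term nu s (u - y))));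
    [intros t; simpl; ring|].
  apply (is_derive_scal (fun u => u ^ i * basis_term nu s (u - y))).
  eapply is_derive_eq.
  - apply (is_derive_mult (fun u => u ^ i) (fun u => basis_term nu s (u - y)));
      [| |intros; apply Rmult_comm].
    + apply (is_derive_pow (fun u => u) i x 1), (is_derive_id (K := R_AbsRing)).
    + apply (is_derive_comp (basis_term nu s) (fun u => u - y)); [exact Hb|].
      auto_derive; auto.
  - unfold plus, scal; simpl; unfold mult; simpl; ring.
Qed.

Inductive combination (w : nat) : (R -> R -> R -> R) -> Prop :=
  | combination_monomial q nu i j :
      (1 <= nu)%nat -> (i + j + nu)%nat = w -> combination w (monomial q nu i j)
  | combination_zero : combination w (fun _ _ _ => 0)
  | combination_plus G H :
      combination w G -> combination w H -> combination w (fun x y s => G x y s + H x y s)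
  (* pointwise closure, in place of functional extensionality *)
  | combination_ext G H :
      (forall x y s, G x y s = H x y s) -> combination w G -> combination w H.

Lemma combination_scale (w : nat) (c : Q) (G : R -> R -> R -> R) :
  combination w G -> combination w (fun x y s => Q2R c * G x y s).
Proof.
  induction 1 as [q nu i j Hnu Hw| |G H _ IHG _ IHH|G H HGH _ IH].
  - apply (combination_ext _ (monomial (c * q) nu i j)); [|now constructor].
    intros; unfold monomial; rewrite Q2R_mult; ring.
  - apply (combination_ext _ (fun _ _ _ => 0)); [intros; ring | constructor].
  - apply (combination_ext _ (fun x y s => Q2R c * G x y s + Q2R c * H x y s));
      [intros; ring | now constructor].
  - apply (combination_ext _ _ _ (fun x y s => f_equal _ (HGH x y s)) IH).
Qed.

Lemma combination_mul_pow_r (w k : nat) (G : R -> R -> R -> R) :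
  combination w G -> combination (w + k) (fun x y s => G x y s * y ^ k).
Proof.
  induction 1 as [q nu i j Hnu Hw| |G H _ IHG _ IHH|G H HGH _ IH].
  - apply (combination_ext _ (monomial q nu i (j + k))); [|constructor; lia].
    intros; unfold monomial; rewrite pow_add; ring.
  - apply (combination_ext _ (fun _ _ _ => 0)); [intros; ring | constructor].
  - apply (combination_ext _ (fun x y s => G x y s * y ^ k + H x y s * y ^ k));
      [intros; ring | now constructor].
  - apply (combination_ext _ _ _
           (fun x y s => f_equal (fun t => t * y ^ k) (HGH x y s)) IH).
Qed.

Lemma combination_swap (w : nat) (G : R -> R -> R -> R) :
  combination w G -> combination w (fun x y s => G y x s).
Proof.
  induction 1 as [q nu i j Hnu Hw| |G H _ IHG _ IHH|G H HGH _ IH].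
  - set (sign := if Nat.even nu then 1%Q else Qopp 1).
    apply (combination_ext _ (monomial (sign * q) nu j i)); [|constructor; lia].
    intros x y s; unfold monomial.
    replace (y - x) with (- (x - y)) by ring.
    rewrite basis_term_opp, Q2R_mult; unfold sign.
    destruct (Nat.even nu); rewrite ?Q2R_opp, RMicromega.Q2R_1; ring.
  - constructor.
  - now constructor.
  - apply (combination_ext _ _ _ (fun x y s => HGH y x s) IH).
Qed.

Lemma combination_continuous (w : nat) (G : R -> R -> R -> R) (x y s : R) :
  combination w G -> continuous (fun u => G u y s) x.
Proof.
  induction 1 as [q nu i j _ _| |G H _ IHG _ IHH|G H HGH _ IH].
  - apply (continuous_mult (fun u => Q2R q * u ^ i * y ^ j)
                           (fun u => basis_term nu s (u - y))).
    + apply (ex_derive_continuous (K := R_AbsRing) (V := R_NormedModule)).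
      auto_derive; auto.
    + apply (continuous_comp (fun u => u - y)); [|apply continuous_basis_term].
      apply (ex_derive_continuous (K := R_AbsRing) (V := R_NormedModule)).
      auto_derive; auto.
  - apply continuous_const.
  - now apply (continuous_plus (fun u => G u y s) (fun u => H u y s)).
  - now apply (continuous_ext (fun u => G u y s)).
Qed.

Lemma pair_sum_plus (N : nat) (P P' : nat -> nat -> Q) (c c' s : R) :
  pair_sum N (fun nu i => P nu i + P' nu i)%Q c c' s
  = pair_sum N P c c' s + pair_sum N P' c c' s.
Proof.
  unfold pair_sum, hom_poly_eval.
  rewrite <- sum_plus; apply sum_eq; intros k _.
  rewrite <- Rmult_plus_distr_r, <- sum_plus; f_equal.
  apply sum_eq; intros i _; rewrite Q2R_plus; ring.
Qed.

Lemma pair_sum_zero (N : nat) (c c' s : R) : pair_sum N (fun _ _ => 0%Q) c c' s = 0.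
Proof.
  apply sum_eq_R0; intros k _.
  unfold hom_poly_eval; rewrite sum_eq_R0; [ring|].
  intros i _; rewrite RMicromega.Q2R_0; ring.
Qed.

Lemma pair_sum_monomial (q : Q) (nu i j : nat) (c c' s : R) : (1 <= nu)%nat ->
  pair_sum (i + j + nu) (fun nu' i' => if andb (nu' =? nu) (i' =? i) then q else 0%Q) c c' s
  = monomial q nu i j c c' s.
Proof.
  intros Hnu; unfold pair_sum, hom_poly_eval.
  rewrite (sum_f_R0_single _ _ (pred nu)); [|lia|].
  2:{ intros k _ Hk; rewrite sum_eq_R0; [ring|]; intros i' _.
      replace (S k =? nu)%nat with false by (symmetry; apply Nat.eqb_neq; lia).
      simpl andb; cbv iota; rewrite RMicromega.Q2R_0; ring. }
  replace (S (pred nu)) with nu by lia.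
  rewrite (sum_f_R0_single _ _ i); [|lia|].
  2:{ intros k _ Hk; rewrite Nat.eqb_refl.
      replace (k =? i)%nat with false by (symmetry; apply Nat.eqb_neq; lia).
      simpl andb; cbv iota; rewrite RMicromega.Q2R_0; ring. }
  rewrite !Nat.eqb_refl; simpl andb; cbv iota.
  replace (i + j + nu - nu - i)%nat with j by lia.
  unfold monomial; ring.
Qed.

Lemma combination_pair_sum (w : nat) (G : R -> R -> R -> R) :
  combination w G -> exists P, forall c c' s, G c c' s = pair_sum w P c c' s.
Proof.
  induction 1 as [q nu i j Hnu <-| |G H _ [P HP] _ [P' HP']|G H HGH _ [P HP]].
  - eexists; intros; symmetry; now apply pair_sum_monomial.
  - eexists; intros; symmetry; apply pair_sum_zero.
  - exists (fun nu i => P nu i + P' nu i)%Q; intros.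
    now rewrite pair_sum_plus, HP, HP'.
  - exists P; intros; now rewrite <- HGH.
Qed.

Definition has_x_primitive (w : nat) (g : R -> R -> R -> R) : Prop :=
  exists G, combination w G /\
    forall s x y : R, 0 < s -> is_derive (fun u : R => G u y s) x (g x y s).

Lemma has_x_primitive_ext (w : nat) (g h : R -> R -> R -> R) :
  (forall x y s, g x y s = h x y s) -> has_x_primitive w g -> has_x_primitive w h.
Proof.
  intros Hgh [G [HG dG]]; exists G; split; [easy|].
  intros s x y Hs; rewrite <- Hgh; now apply dG.
Qed.

Lemma has_x_primitive_zero (w : nat) : has_x_primitive w (fun _ _ _ => 0).
Proof.
  exists (fun _ _ _ => 0); split; [constructor|].
  intros; apply (is_derive_const (K := R_AbsRing) (V := R_NormedModule)).
Qed.

Lemma has_x_primitive_plus (w : nat) (g h : R -> R -> R -> R) :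
  has_x_primitive w g -> has_x_primitive w h ->
  has_x_primitive w (fun x y s => g x y s + h x y s).
Proof.
  intros [G [HG dG]] [H [HH dH]].
  exists (fun x y s => G x y s + H x y s); split; [now constructor|].
  intros; apply (is_derive_plus (fun u => G u y s) (fun u => H u y s)); auto.
Qed.

Lemma has_x_primitive_scale (w : nat) (c : Q) (g : R -> R -> R -> R) :
  has_x_primitive w g -> has_x_primitive w (fun x y s => Q2R c * g x y s).
Proof.
  intros [G [HG dG]].
  exists (fun x y s => Q2R c * G x y s); split; [now apply combination_scale|].
  intros; apply (is_derive_scal (fun u => G u y s)); auto.
Qed.

Lemma has_x_primitive_mul_pow_r (w k : nat) (g : R -> R -> R -> R) :
  has_x_primitive w g -> has_x_primitive (w + k) (fun x y s => g x y s * y ^ k).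
Proof.
  intros [G [HG dG]].
  exists (fun x y s => G x y s * y ^ k); split; [now apply combination_mul_pow_r|].
  intros s x y Hs.
  apply (is_derive_ext (fun u => y ^ k * G u y s)); [intros; apply Rmult_comm|].
  eapply is_derive_eq; [apply (is_derive_scal (fun u => G u y s)); auto | ring].
Qed.

Lemma has_x_primitive_by_parts (w : nat) (g h H : R -> R -> R -> R) :
  combination w H ->
  (forall s x y : R, 0 < s -> is_derive (fun u : R => H u y s) x (g x y s - h x y s)) ->
  has_x_primitive w h -> has_x_primitive w g.
Proof.
  intros HH dH [G [HG dG]].
  exists (fun x y s => H x y s + G x y s); split; [now constructor|].
  intros s x y Hs; eapply is_derive_eq.
  - apply (is_derive_plus (fun u => H u y s) (fun u => G u y s)); auto.
  - unfold plus; simpl; ring.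
Qed.

Lemma has_x_primitive_basis_even (i nu : nat) : Nat.even nu = true ->
  has_x_primitive (i + nu + 1) (fun x y s => x ^ i * basis_term nu s (x - y)).
Proof.
  revert nu; induction i as [i IH] using lt_wf_ind; intros nu Hnu.
  destruct i as [|[|i]].
  - exists (monomial 1 (S nu) 0 0); split; [constructor; lia|].
    intros s x y Hs; eapply is_derive_eq.
    + apply is_derive_monomial, is_derive_basis_term_S; [easy | lra].
    + rewrite RMicromega.Q2R_1; simpl; ring.
  - apply (has_x_primitive_by_parts _ _
      (fun x y s => x ^ 0 * basis_term nu s (x - y) * y ^ 1)
      (monomial (-1 # 2) (S (S nu)) 0 0)).
    + constructor; lia.
    + intros s x y Hs; eapply is_derive_eq.
      * apply is_derive_monomial, is_derive_basis_term_SS; [easy | lra].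
      * unfold Q2R; simpl; field.
    + replace (1 + nu + 1)%nat with (0 + nu + 1 + 1)%nat by lia.
      apply has_x_primitive_mul_pow_r, IH; [lia | easy].
  - apply (has_x_primitive_by_parts _ _
      (fun x y s => x ^ S i * basis_term nu s (x - y) * y ^ 1
         + Q2R (inject_Z (Z.of_nat (S i)) * (1 # 2)) * (x ^ i * basis_term (S (S nu)) s (x - y)))
      (monomial (-1 # 2) (S (S nu)) (S i) 0)).
    + constructor; lia.
    + intros s x y Hs; eapply is_derive_eq.
      * apply is_derive_monomial, is_derive_basis_term_SS; [easy | lra].
      * rewrite Q2R_mult, Q2R_of_nat; unfold Q2R; simpl; field.
    + replace (S (S i) + nu + 1)%nat with (S i + nu + 1 + 1)%nat by lia.
      apply has_x_primitive_plus.
      * apply has_x_primitive_mul_pow_r, IH; [lia | easy].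
      * replace (S i + nu + 1 + 1)%nat with (i + S (S nu) + 1)%nat by lia.
        apply has_x_primitive_scale, IH; [lia | easy].
Qed.

Lemma has_x_primitive_basis_odd (i nu : nat) : Nat.even nu = true ->
  has_x_primitive (i + S nu + 1) (fun x y s => x ^ i * basis_term (S nu) s (x - y)).
Proof.
  intros Hnu.
  assert (Hi : ~ (inject_Z (Z.of_nat (S i)) == 0)%Q) by (unfold Qeq; simpl; lia).
  apply (has_x_primitive_by_parts _ _
    (fun x y s => Q2R (- / inject_Z (Z.of_nat (S i))) * (x ^ S i * basis_term nu s (x - y)))
    (monomial (/ inject_Z (Z.of_nat (S i))) (S nu) (S i) 0)).
  - constructor; lia.
  - intros s x y Hs; eapply is_derive_eq.
    + apply is_derive_monomial, is_derive_basis_term_S; [easy | lra].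
    + assert (HS := not_0_INR (S i) (Nat.neq_succ_0 i)).
      rewrite Q2R_opp, Q2R_inv, Q2R_of_nat by exact Hi.
      simpl pred; simpl pow; field; exact HS.
  - replace (i + S nu + 1)%nat with (S i + nu + 1)%nat by lia.
    now apply has_x_primitive_scale, has_x_primitive_basis_even.
Qed.

Lemma has_x_primitive_basis (i nu : nat) :
  has_x_primitive (i + nu + 1) (fun x y s => x ^ i * basis_term nu s (x - y)).
Proof.
  destruct (Nat.even nu) eqn:Hnu; [now apply has_x_primitive_basis_even|].
  destruct nu as [|nu]; [discriminate|].
  apply has_x_primitive_basis_odd.
  rewrite Nat.even_succ, <- Nat.negb_even in Hnu.
  now destruct (Nat.even nu).
Qed.

Lemma has_x_primitive_monomial (q : Q) (nu i j : nat) :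
  has_x_primitive (i + j + nu + 1) (monomial q nu i j).
Proof.
  apply (has_x_primitive_ext _
    (fun x y s => Q2R q * (x ^ i * basis_term nu s (x - y) * y ^ j)));
    [intros; unfold monomial; ring|].
  replace (i + j + nu + 1)%nat with (i + nu + 1 + j)%nat by lia.
  apply has_x_primitive_scale, has_x_primitive_mul_pow_r, has_x_primitive_basis.
Qed.

Lemma has_x_primitive_combination (w : nat) (g : R -> R -> R -> R) :
  combination w g -> has_x_primitive (S w) g.
Proof.
  induction 1 as [q nu i j _ <-| |G H _ IHG _ IHH|G H HGH _ IH].
  - replace (S (i + j + nu)) with (i + j + nu + 1)%nat by lia.
    apply has_x_primitive_monomial.
  - apply has_x_primitive_zero.
  - now apply has_x_primitive_plus.
  - now apply (has_x_primitive_ext _ G).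
Qed.

Theorem lemma2 (n m : nat) :
  exists P : bool -> bool -> nat -> nat -> Q,
    forall a b a' b' sigma : R, 0 < sigma ->
      fint n m a b a' b' sigma =
        pair_sum (n + m + 2) (P false false) a a' sigma
      + pair_sum (n + m + 2) (P false true) a b' sigma
      + pair_sum (n + m + 2) (P true false) b a' sigma
      + pair_sum (n + m + 2) (P true true) b b' sigma.
Proof.
  destruct (has_x_primitive_monomial 1 0 m n) as [G [HG dG]].
  pose proof (combination_swap _ _ HG) as HG'.
  destruct (has_x_primitive_combination _ _ HG') as [F [HF dF]].
  replace (S (m + n + 0 + 1)) with (n + m + 2)%nat in HF by lia.
  destruct (combination_pair_sum _ _ HF) as [P HP].
  destruct (combination_pair_sum _ _ (combination_scale _ (Qopp 1) _ HF)) as [P' HP'].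
  exists (fun c c' => if Bool.eqb c c' then P else P').
  intros a b a' b' s Hs; simpl.
  rewrite <- !HP, <- !HP', Q2R_opp, RMicromega.Q2R_1.
  unfold fint.
  rewrite (RInt_RInt_of_primitives _ (fun x y => G y x s) (fun x y => F x y s)); [ring| | | |].
  - intros x y; eapply is_derive_eq; [apply dG, Hs|].
    unfold monomial, basis_term; simpl Nat.even; cbv iota.
    rewrite RMicromega.Q2R_1.
    replace ((y - x) ^ 2) with ((x - y) ^ 2) by ring.
    simpl; field.
  - intros x y; apply (ex_derive_continuous (K := R_AbsRing) (V := R_NormedModule)).
    auto_derive; auto.
  - intros x y; now apply dF.
  - intros x y; exact (combination_continuous _ _ x y s HG').
Qed.
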